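(* Let $G$ be a finitely generated group and let $E$ be a finite right zero semigroup. Then $|\Omega(G\times E)|=|\Omega G|$.
   Context: A right zero semigroup is a semigroup $E$ with $ef=f$ for all $e,f\in E$; $G\times E$ is the direct product semigroup. A digraph on $\Omega$ is a subset $\Gamma\subseteq\Omega\times\Omega$. A path is a sequence of pairwise distinct vertices $(v_0,v_1,\ldots)$ with $(v_i,v_{i+1})\in\Gamma$ (length 0 allowed); a ray is an infinite path; an anti-ray is an infinite sequence of distinct vertices with $(v_{i+1},v_i)\in\Gamma$. For infinite $\Sigma',\Sigma\subseteq\Omega$, $\Sigma'\preccurlyeq\Sigma$ means there are infinitely many pairwise vertex-disjoint paths from vertices of $\Sigma'$ to vertices of $\Sigma$. On rays and anti-rays $\preccurlyeq$ is a preorder with associated equivalence $\approx$; the ends are the $\approx$-classes of rays and anti-rays, and $\Omega\Gamma$ denotes the poset of ends. The right Cayley graph $\Gamma_r(S,A)$ has vertex set $S$ and edges $(x,xa)$, $x\in S$, $a\in A$. For a finitely generated semigroup $S$ (in particular a finitely generated group regarded as a semigroup), $\Omega S:=\Omega\Gamma_r(S,A)$ for any finite semigroup generating set $A$ (well defined up to isomorphism). *)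

From Stdlib Require Import List.
Import ListNotations.

Definition digraph (V : Type) := V -> V -> Prop.

Definition is_path {V : Type} (Gam : digraph V) (p : list V) : Prop :=
  p <> [] /\ NoDup p /\
  (forall i x y, nth_error p i = Some x -> nth_error p (S i) = Some y -> Gam x y).

Definition path_from_to {V : Type} (Gam : digraph V) (Sig' Sig : V -> Prop)
  (p : list V) : Prop :=
  is_path Gam p /\
  (exists x q, p = x :: q /\ Sig' x /\ Sig (last q x)).

(* Sigma' ≼ Sigma : infinitely many pairwise vertex-disjoint paths from
   Sigma' to Sigma (an infinite family of such paths contains a countable one,
   so we ask for a sequence of them). *)
Definition preceq {V : Type} (Gam : digraph V) (Sig' Sig : V -> Prop) : Prop :=
  exists P : nat -> list V,
    (forall n, path_from_to Gam Sig' Sig (P n)) /\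
    (forall n m v, n <> m -> In v (P n) -> In v (P m) -> False).

Definition is_ray {V : Type} (Gam : digraph V) (r : nat -> V) : Prop :=
  (forall i j, r i = r j -> i = j) /\ (forall i, Gam (r i) (r (S i))).

Definition is_antiray {V : Type} (Gam : digraph V) (r : nat -> V) : Prop :=
  (forall i j, r i = r j -> i = j) /\ (forall i, Gam (r (S i)) (r i)).

Definition ray_or_antiray {V : Type} (Gam : digraph V) (r : nat -> V) : Prop :=
  is_ray Gam r \/ is_antiray Gam r.

Definition range {V : Type} (r : nat -> V) : V -> Prop := fun v => exists i, r i = v.

Definition end_equiv {V : Type} (Gam : digraph V) (r s : nat -> V) : Prop :=
  preceq Gam (range r) (range s) /\ preceq Gam (range s) (range r).

(* |Ω Gam1| = |Ω Gam2| : there is a bijection between the sets of ends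
   (≈-classes of rays and anti-rays), given by a map on representatives that
   respects and reflects ≈ and is surjective onto the classes. *)
Definition same_number_of_ends {V1 V2 : Type} (Gam1 : digraph V1) (Gam2 : digraph V2)
  : Prop :=
  exists f : (nat -> V1) -> (nat -> V2),
    (forall r, ray_or_antiray Gam1 r -> ray_or_antiray Gam2 (f r)) /\
    (forall r s, ray_or_antiray Gam1 r -> ray_or_antiray Gam1 s ->
       (end_equiv Gam1 r s <-> end_equiv Gam2 (f r) (f s))) /\
    (forall s, ray_or_antiray Gam2 s ->
       exists r, ray_or_antiray Gam1 r /\ end_equiv Gam2 (f r) s).

Definition right_cayley {S : Type} (mul : S -> S -> S) (A : list S) : digraph S :=
  fun x y => exists a, In a A /\ y = mul x a.

Definition sgp_generates {S : Type} (mul : S -> S -> S) (A : list S) : Prop :=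
  forall s, exists a l, In a A /\ Forall (fun b => In b A) l /\ s = fold_left mul l a.

Definition is_group {G : Type} (mul : G -> G -> G) (one : G) (inv : G -> G) : Prop :=
  (forall x y z, mul (mul x y) z = mul x (mul y z)) /\
  (forall x, mul one x = x) /\ (forall x, mul x one = x) /\
  (forall x, mul (inv x) x = one) /\ (forall x, mul x (inv x) = one).

Definition right_zero {E : Type} (mulE : E -> E -> E) : Prop :=
  forall e f, mulE e f = f.

Definition prod_mul {G E : Type} (mul : G -> G -> G) (mulE : E -> E -> E)
  : (G * E) -> (G * E) -> (G * E) :=
  fun x y => (mul (fst x) (fst y), mulE (snd x) (snd y)).

From Stdlib Require Import List Arith Lia Classical ClassicalEpsilon FinFun.
Import ListNotations.

(* The projection [fst : G * E -> G] and the section [g |-> (g, e0)] change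
   distances in the Cayley digraphs by a bounded amount, [fst] has finite fibres,
   and every vertex [(g, e)] is within bounded distance of [(g, e0)] in both
   directions, because [E] is right zero: [(g, e) (1, e0) = (g, e0)] and
   [(g, e0) (1, e) = (g, e)].  Ends of digraphs with finite in- and out-degrees
   are invariant under such coarse equivalences.  The image of a ray is
   interpolated by a lazy walk visiting every vertex finitely often, and loop
   erasure turns it into a ray (or anti-ray, for anti-rays) of the other graph.
   Infinitely many disjoint paths map to infinitely many walks with every vertex
   on only finitely many of them, from which infinitely many disjoint paths are
   extracted again; and [preceq] is transitive through the range of such a walk. *)

(** * Lazy walks *)

Definition transpose {V} (Gm : digraph V) : digraph V := fun x y => Gm y x.

Definition lazy_edge {V} (Gm : digraph V) (x y : V) : Prop := x = y \/ Gm x y.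

(* Walks are lazy (they may stand still), so that they can be padded to a
   common length. *)
Inductive walk {V} (Gm : digraph V) : V -> V -> list V -> Prop :=
| walk_refl : forall x, walk Gm x x [x]
| walk_cons : forall x y z l, lazy_edge Gm x y -> walk Gm y z l -> walk Gm x z (x :: l).

Definition reach_within {V} (Gm : digraph V) (K : nat) (x y : V) : Prop :=
  exists l, walk Gm x y l /\ length l <= S K.

Definition lazy_walk_seq {V} (Gm : digraph V) (w : nat -> V) : Prop :=
  forall i, lazy_edge Gm (w i) (w (S i)).

Definition finite_visits {V} (w : nat -> V) : Prop :=
  forall v, exists N, forall n, w n = v -> n < N.

Definition finite_indegree {V} (Gm : digraph V) : Prop :=
  forall y, exists L, forall x, Gm x y -> In x L.

Definition finite_fibres {V1 V2} (h : V1 -> V2) : Prop :=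
  forall y, exists L, forall x, h x = y -> In x L.

Definition image {V1 V2} (h : V1 -> V2) (X : V1 -> Prop) : V2 -> Prop :=
  fun v => exists x, X x /\ h x = v.

Section Walks.
Context {V : Type} (Gm : digraph V).

Lemma walk_head x y l : walk Gm x y l -> exists q, l = x :: q.
Proof. intros H; destruct H; eauto. Qed.

Lemma walk_app x y z l1 l2 :
  walk Gm x y l1 -> walk Gm y z l2 -> walk Gm x z (l1 ++ tl l2).
Proof.
  intros H1; revert z l2; induction H1; intros z' l2 H2; simpl.
  - destruct (walk_head _ _ _ H2) as [q ->]. exact H2.
  - econstructor; eauto.
Qed.

Lemma walk_snoc x y z l : walk Gm x y l -> lazy_edge Gm y z -> walk Gm x z (l ++ [z]).
Proof.
  intros H Hs. change [z] with (tl [y; z]).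
  eapply walk_app; eauto. econstructor; eauto. constructor.
Qed.

Lemma walk_pad x y l k : walk Gm x y l -> walk Gm x y (l ++ repeat y k).
Proof.
  induction 1; simpl.
  - induction k; simpl; [constructor | econstructor; [left |]; eauto].
  - econstructor; eauto.
Qed.

Lemma walk_prefix x y l v :
  walk Gm x y l -> In v l -> exists l', walk Gm x v l' /\ length l' <= length l.
Proof.
  intros H; induction H; simpl; intros Hv.
  - destruct Hv as [<-|[]]. exists [x]; split; [constructor | simpl; lia].
  - destruct Hv as [<-|Hv].
    + exists [x]; split; [constructor | simpl; lia].
    + destruct (IHwalk Hv) as [l' [H1 H2]].
      exists (x :: l'); split; [econstructor; eauto | simpl; lia].
Qed.

Lemma walk_suffix x y l v :
  walk Gm x y l -> In v l -> exists l', walk Gm v y l' /\ length l' <= length l.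
Proof.
  intros H; induction H; simpl; intros Hv.
  - destruct Hv as [<-|[]]. exists [x]; split; [constructor | simpl; lia].
  - destruct Hv as [<-|Hv].
    + exists (x :: l); split; [econstructor; eauto | simpl; lia].
    + destruct (IHwalk Hv) as [l' [H1 H2]]. exists l'; split; auto; lia.
Qed.

Lemma walk_nth_0 x y l d : walk Gm x y l -> nth 0 l d = x.
Proof. intros H; destruct H; reflexivity. Qed.

Lemma walk_nth_S x y l d :
  walk Gm x y l -> forall j, S j < length l -> lazy_edge Gm (nth j l d) (nth (S j) l d).
Proof.
  induction 1; intros j Hj; simpl in *; [lia|].
  destruct j as [|j].
  - rewrite (walk_nth_0 _ _ _ d H0). exact H.
  - apply IHwalk. lia.
Qed.

Lemma walk_nth_last x y l d : walk Gm x y l -> nth (length l - 1) l d = y.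
Proof.
  induction 1; simpl; [reflexivity|].
  destruct (walk_head _ _ _ H0) as [q ->]. simpl in *. rewrite Nat.sub_0_r in IHwalk. exact IHwalk.
Qed.

Lemma reach_within_refl K x : reach_within Gm K x x.
Proof. exists [x]; split; [constructor | simpl; lia]. Qed.

Lemma reach_within_mono K K' x y : reach_within Gm K x y -> K <= K' -> reach_within Gm K' x y.
Proof. intros [l [H1 H2]] H; exists l; split; auto; lia. Qed.

End Walks.

Lemma walk_transpose {V} (Gm : digraph V) x y l : walk Gm x y l -> walk (transpose Gm) y x (rev l).
Proof.
  induction 1; simpl; [constructor|].
  eapply walk_snoc; eauto. destruct H as [->|H]; [left | right]; auto.
Qed.

Lemma reach_within_transpose {V} (Gm : digraph V) K x y :
  reach_within Gm K x y -> reach_within (transpose Gm) K y x.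
Proof.
  intros [l [H1 H2]]. exists (rev l).
  split; [apply walk_transpose; auto | rewrite length_rev; auto].
Qed.

(** * Paths *)

Inductive chain {V} (Gm : digraph V) : list V -> Prop :=
| chain_nil : chain Gm []
| chain_one : forall x, chain Gm [x]
| chain_cons : forall x y l, Gm x y -> chain Gm (y :: l) -> chain Gm (x :: y :: l).

Lemma chain_nth_error {V} (Gm : digraph V) l :
  chain Gm l <->
  (forall i x y, nth_error l i = Some x -> nth_error l (S i) = Some y -> Gm x y).
Proof.
  split.
  - induction 1; intros i a b H1 H2.
    + destruct i; discriminate.
    + destruct i as [|[]]; discriminate.
    + destruct i; simpl in *; [inversion H1; inversion H2; subst; auto | eauto].
  - induction l as [|a l IH]; intros H; [constructor|].
    destruct l as [|b l]; constructor.
    + apply (H 0); reflexivity.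
    + apply IH. intros i x y H1 H2. apply (H (S i)); auto.
Qed.

Lemma is_path_iff {V} (Gm : digraph V) p : is_path Gm p <-> p <> [] /\ NoDup p /\ chain Gm p.
Proof. unfold is_path. rewrite chain_nth_error. tauto. Qed.

Lemma chain_tl {V} (Gm : digraph V) a l : chain Gm (a :: l) -> chain Gm l.
Proof. intros H; inversion H; subst; [constructor | auto]. Qed.

Lemma chain_app_r {V} (Gm : digraph V) l1 l2 : chain Gm (l1 ++ l2) -> chain Gm l2.
Proof. induction l1; simpl; eauto using chain_tl. Qed.

Lemma last_cons_default {A} (a : A) q d : last (a :: q) d = last q a.
Proof.
  revert a d; induction q as [|b q IH]; intros a d; [reflexivity|].
  change (last (b :: q) d = last (b :: q) a). rewrite (IH b d), (IH b a). reflexivity.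
Qed.

Lemma last_app_cons {A} (l1 : list A) a l2 d : last (l1 ++ a :: l2) d = last (a :: l2) d.
Proof.
  induction l1 as [|b l1 IH]; [reflexivity|].
  rewrite <- IH, <- app_comm_cons. destruct (l1 ++ a :: l2) eqn:E; [|reflexivity].
  destruct l1; discriminate.
Qed.

Lemma last_in {A} (x : A) q : In (last q x) (x :: q).
Proof.
  revert x; induction q as [|a q IH]; intros x; [left; reflexivity|].
  right. rewrite last_cons_default. apply IH.
Qed.

Lemma chain_walk {V} (Gm : digraph V) x q : chain Gm (x :: q) -> walk Gm x (last q x) (x :: q).
Proof.
  revert x; induction q as [|a q IH]; intros x H; [constructor|].
  inversion H; subst. rewrite last_cons_default.
  econstructor; [right |]; eauto.
Qed.

Lemma walk_shortcut {V} (Gm : digraph V) x y l :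
  walk Gm x y l ->
  exists p, is_path Gm p /\ (exists q, p = x :: q /\ last q x = y) /\ incl p l.
Proof.
  induction 1 as [x|x y z l Hs Hw IH].
  - exists [x]. split; [|split; [exists []; auto | apply incl_refl]].
    apply is_path_iff. repeat constructor; [discriminate | intros []].
  - destruct IH as [p [Hp [[q [Hpq Hl]] Hinc]]].
    apply is_path_iff in Hp. destruct Hp as [_ [Hnd Hch]].
    destruct (classic (In x p)) as [Hx|Hx].
    + destruct (in_split _ _ Hx) as [p1 [p2 Hsp]]. rewrite Hsp in Hnd, Hch.
      exists (x :: p2). split; [|split].
      * apply is_path_iff. repeat split; [discriminate | |].
        -- eapply NoDup_app_remove_l; eauto.
        -- eapply chain_app_r; eauto.
      * exists p2. split; auto. rewrite <- Hl, <- (last_cons_default y q y), <- Hpq, Hsp.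
        rewrite last_app_cons, last_cons_default. reflexivity.
      * intros v [<-|Hv]; [left; auto|].
        right. apply Hinc. rewrite Hsp. apply in_or_app; simpl; auto.
    + exists (x :: p). split; [|split].
      * apply is_path_iff. repeat split; [discriminate | constructor; auto |].
        subst p. constructor; auto. destruct Hs as [<-|Hs]; auto. exfalso; apply Hx; left; auto.
      * exists p. split; auto. subst p. rewrite last_cons_default. auto.
      * intros v [<-|Hv]; [left | right]; auto.
Qed.

Lemma path_from_to_walk {V} (Gm : digraph V) X Y p :
  path_from_to Gm X Y p -> exists x y, X x /\ Y y /\ walk Gm x y p.
Proof.
  intros [Hp [x [q [-> [HX HY]]]]]. apply is_path_iff in Hp.
  exists x, (last q x). repeat split; auto. apply chain_walk; tauto.
Qed.

(** * Families of disjoint paths *)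

Lemma le_list_max n l : In n l -> n <= list_max l.
Proof. intros H. exact (proj1 (Forall_forall _ _) (proj1 (list_max_le l _) (le_n _)) n H). Qed.

(* The first component is the index picked at stage [k]; the second bounds
   [Bf] of all indices picked so far, and the next pick is chosen beyond it. *)
Fixpoint sparse_pick (Bf : nat -> nat) (k : nat) : nat * nat :=
  match k with
  | 0 => (0, Bf 0)
  | S k' => let (i, b) := sparse_pick Bf k' in (S (i + b), b + Bf (S (i + b)))
  end.

Lemma sparse_pick_spec Bf j k : j < k ->
  Bf (fst (sparse_pick Bf j)) < fst (sparse_pick Bf k).
Proof.
  assert (Hb : forall i, Bf (fst (sparse_pick Bf i)) <= snd (sparse_pick Bf i)).
  { intros [|i]; simpl; [lia|]. destruct (sparse_pick Bf i); simpl; lia. }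
  assert (Hm : forall i i', i <= i' -> snd (sparse_pick Bf i) <= snd (sparse_pick Bf i')).
  { intros i i'; induction 1; simpl; [lia|]. destruct (sparse_pick Bf m); simpl in *; lia. }
  intros Hjk. destruct k as [|k]; [lia|].
  specialize (Hb j). specialize (Hm j k ltac:(lia)). simpl.
  destruct (sparse_pick Bf k); simpl in *; lia.
Qed.

(* Shortcut every walk to a path; a path through [v] only meets walks of
   index below [Nf v], so picking indices sparsely enough makes them disjoint. *)
Lemma preceq_of_walks {V} (Gm : digraph V) (X Y : V -> Prop) (W : nat -> list V) :
  (forall n, exists x y, X x /\ Y y /\ walk Gm x y (W n)) ->
  (forall v, exists N, forall n, In v (W n) -> n < N) ->
  preceq Gm X Y.
Proof.
  intros HW Hfin.
  assert (Hp : forall n, exists p, path_from_to Gm X Y p /\ incl p (W n)).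
  { intros n. destruct (HW n) as [x [y [Hx [Hy Hw]]]].
    destruct (walk_shortcut _ _ _ _ Hw) as [p [Hp [[q [Hpq Hl]] Hinc]]].
    exists p. split; auto. split; auto. exists x, q. subst; auto. }
  apply choice in Hp. destruct Hp as [p Hp].
  apply choice in Hfin. destruct Hfin as [Nf HNf].
  set (Bf := fun n => list_max (map Nf (p n))).
  assert (HB : forall v n, In v (p n) -> Nf v <= Bf n).
  { intros v n Hv. apply le_list_max, in_map; auto. }
  assert (HN : forall v n, In v (p n) -> n < Nf v).
  { intros v n Hv. apply HNf, (proj2 (Hp n)); auto. }
  assert (Hlt : forall j k v, j < k ->
    In v (p (fst (sparse_pick Bf j))) -> In v (p (fst (sparse_pick Bf k))) -> False).
  { intros j k v Hjk H1 H2.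
    pose proof (HB _ _ H1). pose proof (HN _ _ H2). pose proof (sparse_pick_spec Bf j k Hjk). lia. }
  exists (fun k => p (fst (sparse_pick Bf k))). split; [intros n; apply Hp|].
  intros n m v Hnm H1 H2.
  destruct (Nat.lt_total n m) as [H|[H|H]]; [eapply Hlt | contradiction | eapply Hlt]; eauto.
Qed.

Lemma bound_on_list {V} (R : V -> nat -> Prop) :
  (forall v, exists N, forall n, R v n -> n < N) ->
  forall L, exists N, forall v n, In v L -> R v n -> n < N.
Proof.
  intros H L; induction L as [|a L IH]; [exists 0; intros v n []|].
  destruct (H a) as [N1 H1], IH as [N2 H2]. exists (N1 + N2).
  intros v n [<-|Hv] Hr; [specialize (H1 _ Hr) | specialize (H2 _ _ Hv Hr)]; lia.
Qed.

Lemma finite_visits_list {V} (c : nat -> V) :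
  finite_visits c -> forall L, exists N, forall n, In (c n) L -> n < N.
Proof.
  intros H L. destruct (bound_on_list (fun v n => c n = v) H L) as [N HN].
  exists N. intros n Hn. eapply HN; eauto.
Qed.

Lemma injective_finite_visits {V} (c : nat -> V) : Injective c -> finite_visits c.
Proof.
  intros H v. destruct (classic (exists n0, c n0 = v)) as [[n0 H0]|H0].
  - exists (S n0). intros n Hn. assert (n = n0) by (apply H; congruence). lia.
  - exists 0. intros n Hn. exfalso; eauto.
Qed.

Definition disjoint_family {V} (P : nat -> list V) : Prop :=
  forall n m v, n <> m -> In v (P n) -> In v (P m) -> False.

Lemma disjoint_family_bound {V} (P : nat -> list V) : disjoint_family P ->
  forall v (g : nat -> nat), exists N, forall a, In v (P a) -> g a < N.
Proof.
  intros H v g. destruct (classic (exists a0, In v (P a0))) as [[a0 H0]|H0].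
  - exists (S (g a0)). intros a Ha. destruct (Nat.eq_dec a a0) as [->|Hne]; [lia|].
    exfalso; eapply H; eauto.
  - exists 0. intros a Ha. exfalso; eauto.
Qed.

Lemma preceq_of_common_seq {V} (Gm : digraph V) (X Y : V -> Prop) (s : nat -> V) :
  Injective s -> (forall n, X (s n) /\ Y (s n)) -> preceq Gm X Y.
Proof.
  intros Hinj H. exists (fun n => [s n]). split.
  - intros n. split; [|exists (s n), []; split; [reflexivity | apply H]].
    apply is_path_iff. repeat constructor; [discriminate | intros []].
  - intros n m v Hnm [<-|[]] [E|[]]. apply Hnm, Hinj; auto.
Qed.

Lemma preceq_mono {V} (Gm : digraph V) (X X' Y Y' : V -> Prop) :
  (forall v, X v -> X' v) -> (forall v, Y v -> Y' v) -> preceq Gm X Y -> preceq Gm X' Y'.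
Proof.
  intros HX HY [P [HP HD]]. exists P. split; auto.
  intros n. destruct (HP n) as [Hp [x [q [E [H1 H2]]]]]. split; auto. exists x, q; auto.
Qed.

Lemma preceq_transpose {V} (Gm : digraph V) X Y : preceq Gm X Y -> preceq (transpose Gm) Y X.
Proof.
  intros [P [HP HD]]. apply (preceq_of_walks _ _ _ (fun n => rev (P n))).
  - intros n. destruct (path_from_to_walk _ _ _ _ (HP n)) as [x [y [Hx [Hy Hw]]]].
    exists y, x. repeat split; auto. apply walk_transpose; auto.
  - intros v. destruct (disjoint_family_bound P HD v (fun a => a)) as [N HN]. exists N.
    intros n Hn. apply HN, in_rev; auto.
Qed.

Lemma finite_union {A B} (R : A -> B -> Prop) :
  (forall a, exists L, forall b, R a b -> In b L) ->
  forall La, exists L, forall a b, In a La -> R a b -> In b L.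
Proof.
  intros H La; induction La as [|a La IH]; [exists []; intros a b []|].
  destruct (H a) as [L1 H1], IH as [L2 H2]. exists (L1 ++ L2).
  intros a' b [<-|Ha] Hr; apply in_or_app; eauto.
Qed.

Lemma reach_within_finite_sources {V} (Gm : digraph V) : finite_indegree Gm ->
  forall K v, exists L, forall x, reach_within Gm K x v -> In x L.
Proof.
  intros Hf K v. induction K as [|K IH].
  - exists [v]. intros x [l [Hw Hl]]. inversion Hw; subst; [left; auto|].
    destruct (walk_head _ _ _ _ H0) as [q ->]. simpl in Hl; lia.
  - destruct IH as [L HL].
    destruct (finite_union (fun y x => Gm x y) Hf L) as [L' HL'].
    exists (v :: L ++ L'). intros x [l [Hw Hl]]. inversion Hw; subst; [left; auto|].
    right. apply in_or_app.
    assert (Hy : In y L) by (apply HL; exists l0; split; auto; simpl in Hl; lia).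
    destruct H as [<-|H]; [left | right]; eauto.
Qed.

Lemma preceq_of_near {V} (Gm : digraph V) K (c : nat -> V) (X Y : V -> Prop) :
  finite_indegree Gm -> finite_visits c ->
  (forall n, X (c n) /\ exists y, Y y /\ reach_within Gm K (c n) y) -> preceq Gm X Y.
Proof.
  intros Hf Hc H.
  assert (H' : forall n, exists l, exists y, Y y /\ walk Gm (c n) y l /\ length l <= S K).
  { intros n. destruct (H n) as [_ [y [Hy [l [Hw Hl]]]]]. eauto. }
  apply choice in H'. destruct H' as [W HW].
  apply (preceq_of_walks _ _ _ W).
  - intros n. destruct (HW n) as [y [Hy [Hw _]]]. exists (c n), y. repeat split; auto. apply H.
  - intros v. destruct (reach_within_finite_sources Gm Hf K v) as [L HL].
    destruct (finite_visits_list c Hc L) as [N HN].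
    exists N. intros n Hv. apply HN, HL. destruct (HW n) as [y [_ [Hw Hl]]].
    destruct (walk_prefix _ _ _ _ _ Hw Hv) as [l' [H1 H2]]. exists l'; split; auto; lia.
Qed.

Definition coarse_map {V1 V2} (G1 : digraph V1) (G2 : digraph V2) (h : V1 -> V2) (K : nat) :=
  forall x y, G1 x y -> reach_within G2 K (h x) (h y).

Lemma coarse_map_transpose {V1 V2} (G1 : digraph V1) (G2 : digraph V2) h K :
  coarse_map G1 G2 h K -> coarse_map (transpose G1) (transpose G2) h K.
Proof. intros H x y Hxy. apply reach_within_transpose, H, Hxy. Qed.

Lemma walk_image {V1 V2} (G1 : digraph V1) (G2 : digraph V2) (h : V1 -> V2) K :
  coarse_map G1 G2 h K ->
  forall q x, chain G1 (x :: q) -> exists l, walk G2 (h x) (h (last q x)) l /\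
    forall v, In v l -> exists z, In z (x :: q) /\ reach_within G2 K (h z) v.
Proof.
  intros He q. induction q as [|a q IH]; intros x Hc.
  - exists [h x]. split; [constructor|].
    intros v [<-|[]]. exists x; split; [left; auto | apply reach_within_refl].
  - inversion Hc; subst. destruct (He _ _ H1) as [l1 [Hw1 Hl1]].
    destruct (IH a H3) as [l2 [Hw2 Hv2]]. exists (l1 ++ tl l2). split.
    + rewrite last_cons_default. eapply walk_app; eauto.
    + intros v Hv. apply in_app_or in Hv. destruct Hv as [Hv|Hv].
      * exists x. split; [left; auto|]. destruct (walk_prefix _ _ _ _ _ Hw1 Hv) as [l' [H1' H2']].
        exists l'; split; auto; lia.
      * assert (Hv' : In v l2) by (destruct l2; simpl in *; auto).
        destruct (Hv2 v Hv') as [z [Hz Hr]]. exists z; split; [right|]; auto.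
Qed.

(* The images of disjoint paths are walks; a vertex [v] of the image comes
   from one of the finitely many vertices [K]-close to the fibre over [v]. *)
Lemma preceq_image {V1 V2} (G1 : digraph V1) (G2 : digraph V2) (h : V1 -> V2) K X Y :
  finite_indegree G2 -> finite_fibres h -> coarse_map G1 G2 h K ->
  preceq G1 X Y -> preceq G2 (image h X) (image h Y).
Proof.
  intros Hf Hfib He [P [HP HD]].
  assert (H : forall n, exists l, exists x q, P n = x :: q /\ X x /\ Y (last q x) /\
     walk G2 (h x) (h (last q x)) l /\
     forall v, In v l -> exists z, In z (P n) /\ reach_within G2 K (h z) v).
  { intros n. destruct (HP n) as [Hp [x [q [E [HX HY]]]]].
    apply is_path_iff in Hp. destruct Hp as [_ [_ Hc]]. rewrite E in Hc.
    destruct (walk_image G1 G2 h K He q x Hc) as [l [Hw Hv]]. exists l, x, q.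
    repeat split; auto. rewrite E; auto. }
  apply choice in H. destruct H as [W HW].
  apply (preceq_of_walks _ _ _ W).
  - intros n. destruct (HW n) as [x [q [_ [HX [HY [Hw _]]]]]].
    exists (h x), (h (last q x)). repeat split; auto; eexists; split; eauto.
  - intros v. destruct (reach_within_finite_sources G2 Hf K v) as [L HL].
    destruct (finite_union (fun y x => h x = y) Hfib L) as [L' HL'].
    destruct (bound_on_list (fun z n => In z (P n))
       (fun z => disjoint_family_bound P HD z (fun a => a)) L') as [N HN].
    exists N. intros n Hv. destruct (HW n) as [x [q [_ [_ [_ [_ Hz]]]]]].
    destruct (Hz v Hv) as [z [Hzn Hr]]. eapply HN; eauto.
Qed.

Lemma injective_unbounded (f : nat -> nat) : Injective f -> forall n, exists a, n <= f a.
Proof.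
  intros Hinj n. apply NNPP. intros Hc.
  assert (Hlt : forall a, f a < n).
  { intros a. destruct (Nat.lt_ge_cases (f a) n); auto. exfalso; eauto. }
  assert (Hnd : NoDup (map f (seq 0 (S n)))) by (apply Injective_map_NoDup, seq_NoDup; auto).
  assert (Hinc : incl (map f (seq 0 (S n))) (seq 0 n)).
  { intros y Hy. apply in_map_iff in Hy. destruct Hy as [a [<- _]].
    apply in_seq. specialize (Hlt a); lia. }
  pose proof (NoDup_incl_length Hnd Hinc). rewrite length_map, !length_seq in H. lia.
Qed.

Lemma walk_segment {V} (Gm : digraph V) w : lazy_walk_seq Gm w ->
  forall k i, walk Gm (w i) (w (i + k)) (map w (seq i (S k))).
Proof.
  intros Hs k. induction k as [|k IH]; intros i.
  - rewrite Nat.add_0_r. constructor.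
  - replace (i + S k) with (S i + k) by lia. simpl. econstructor; [apply Hs | apply (IH (S i))].
Qed.

Lemma preceq_landing {V} (Gm : digraph V) X (w : nat -> V) :
  preceq Gm X (range w) ->
  exists P al, disjoint_family P /\ Injective al /\
    forall a, exists x q, P a = x :: q /\ X x /\ w (al a) = last q x /\ chain Gm (x :: q).
Proof.
  intros [P [HP HPD]].
  assert (Ha : forall a, exists i, exists x q,
    P a = x :: q /\ X x /\ w i = last q x /\ chain Gm (x :: q)).
  { intros a. destruct (HP a) as [Hp [x [q [E [HX [i Hi]]]]]]. apply is_path_iff in Hp.
    destruct Hp as [_ [_ Hc]]. rewrite E in Hc. exists i, x, q. repeat split; auto. }
  apply choice in Ha. destruct Ha as [al Hal]. exists P, al. repeat split; auto.
  intros a b E. apply NNPP; intros Hne.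
  destruct (Hal a) as [x [q [E1 [_ [E2 _]]]]], (Hal b) as [x' [q' [E1' [_ [E2' _]]]]].
  apply (HPD a b (last q x) Hne); [rewrite E1; apply last_in|].
  rewrite <- E2, E, E2', E1'. apply last_in.
Qed.

Lemma preceq_departure {V} (Gm : digraph V) Y (w : nat -> V) :
  preceq Gm (range w) Y ->
  exists Q be, disjoint_family Q /\ Injective be /\
    forall b, exists y q, Q b = y :: q /\ Y (last q y) /\ w (be b) = y /\ chain Gm (y :: q).
Proof.
  intros [Q [HQ HQD]].
  assert (Hb : forall b, exists i, exists y q,
    Q b = y :: q /\ Y (last q y) /\ w i = y /\ chain Gm (y :: q)).
  { intros b. destruct (HQ b) as [Hp [y [q [E [[i Hi] HY]]]]]. apply is_path_iff in Hp.
    destruct Hp as [_ [_ Hc]]. rewrite E in Hc. exists i, y, q. repeat split; auto. }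
  apply choice in Hb. destruct Hb as [be Hbe]. exists Q, be. repeat split; auto.
  intros a b E. apply NNPP; intros Hne.
  destruct (Hbe a) as [x [q [E1 [_ [E2 _]]]]], (Hbe b) as [x' [q' [E1' [_ [E2' _]]]]].
  apply (HQD a b x Hne); [rewrite E1; left; auto|].
  rewrite <- E2, E, E2', E1'. left; auto.
Qed.

(* Concatenate a path landing on [w] at time [i], the segment of [w] from [i]
   to a later departure time [j >= i], and a path departing from there.  Since
   [i] is taken at least [n] for the [n]-th walk and [w] visits each vertex
   finitely often, every vertex lies on finitely many of these walks. *)
Lemma preceq_trans_walk {V} (Gm : digraph V) (w : nat -> V) X Y :
  lazy_walk_seq Gm w -> finite_visits w ->
  preceq Gm X (range w) -> preceq Gm (range w) Y -> preceq Gm X Y.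
Proof.
  intros Hs Hf HX HY.
  destruct (preceq_landing Gm X w HX) as [P [al [HPD [Hinja Hal]]]].
  destruct (preceq_departure Gm Y w HY) as [Q [be [HQD [Hinjb Hbe]]]].
  assert (Hch : forall n, exists ab, n <= al (fst ab) /\ al (fst ab) <= be (snd ab)).
  { intros n. destruct (injective_unbounded al Hinja n) as [a Ha].
    destruct (injective_unbounded be Hinjb (al a)) as [b Hb]. exists (a, b); simpl; auto. }
  apply choice in Hch. destruct Hch as [ab Hab].
  set (i n := al (fst (ab n))). set (j n := be (snd (ab n))).
  apply (preceq_of_walks _ _ _
    (fun n => P (fst (ab n)) ++ tl (map w (seq (i n) (S (j n - i n))) ++ tl (Q (snd (ab n)))))).
  - intros n. destruct (Hal (fst (ab n))) as [x [q [E1 [HXx [E2 Hc1]]]]].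
    destruct (Hbe (snd (ab n))) as [y [q' [E1' [HYy [E2' Hc2]]]]].
    exists x, (last q' y). repeat split; auto. rewrite E1.
    eapply walk_app; [apply chain_walk; eauto|]. fold (i n) in E2. rewrite <- E2.
    eapply walk_app; [apply walk_segment; auto|].
    destruct (Hab n) as [_ Hle]. fold (i n) (j n) in Hle.
    replace (i n + (j n - i n)) with (j n) by lia.
    unfold j. rewrite E2', E1'. apply chain_walk; auto.
  - intros v. destruct (disjoint_family_bound P HPD v al) as [N1 H1].
    destruct (disjoint_family_bound Q HQD v be) as [N2 H2]. destruct (Hf v) as [N3 H3].
    exists (N1 + N2 + N3). intros n Hv. destruct (Hab n) as [Hn Hle]. subst i j; cbv beta in *.
    apply in_app_or in Hv. destruct Hv as [Hv|Hv]; [specialize (H1 _ Hv); lia|].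
    assert (Htl : forall (l : list V), In v (tl l) -> In v l) by (intros []; simpl; auto).
    apply Htl, in_app_or in Hv. destruct Hv as [Hv|Hv].
    + apply in_map_iff in Hv. destruct Hv as [k [Ek Hk]]. apply in_seq in Hk.
      specialize (H3 _ Ek); lia.
    + apply Htl in Hv. specialize (H2 _ Hv); lia.
Qed.

Definition two_way_walk {V} (Gm : digraph V) (w : nat -> V) : Prop :=
  lazy_walk_seq Gm w \/ lazy_walk_seq (transpose Gm) w.

Lemma preceq_trans_two_way {V} (Gm : digraph V) (w : nat -> V) X Y :
  two_way_walk Gm w -> finite_visits w ->
  preceq Gm X (range w) -> preceq Gm (range w) Y -> preceq Gm X Y.
Proof.
  intros [Hs|Hs] Hf H1 H2; [eapply preceq_trans_walk; eauto|].
  apply preceq_transpose in H1, H2.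
  exact (preceq_transpose _ _ _ (preceq_trans_walk _ w _ _ Hs Hf H2 H1)).
Qed.

(** * Interpolation and loop erasure *)

Definition concat_walks {V} (M : nat) (p : nat -> list V) (d : V) (n : nat) : V :=
  nth (n mod M) (p (n / M)) d.

Section ConcatWalks.
Context {V : Type} (Gm : digraph V) (M : nat) (c : nat -> V) (p : nat -> list V).
Hypothesis p_walk : forall i, walk Gm (c i) (c (S i)) (p i).
Hypothesis p_length : forall i, length (p i) = S M.

Lemma concat_walks_at d q r : r <= M -> concat_walks (S M) p d (S M * q + r) = nth r (p q) d.
Proof.
  intros Hr. unfold concat_walks.
  rewrite <- (Nat.div_unique (S M * q + r) (S M) q r), <- (Nat.mod_unique (S M * q + r) (S M) q r);
    auto; lia.
Qed.

Lemma concat_walks_cases n : exists q r, r <= M /\ n = S M * q + r.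
Proof.
  exists (n / S M), (n mod S M). split; [pose proof (Nat.mod_upper_bound n (S M)); lia|].
  apply Nat.div_mod; lia.
Qed.

Lemma concat_walks_start d i : concat_walks (S M) p d (S M * i) = c i.
Proof.
  rewrite <- (Nat.add_0_r (S M * i)), concat_walks_at by lia.
  exact (walk_nth_0 _ _ _ _ _ (p_walk i)).
Qed.

Lemma concat_walks_lazy d : lazy_walk_seq Gm (concat_walks (S M) p d).
Proof.
  intros n. destruct (concat_walks_cases n) as [q [r [Hr ->]]]. rewrite concat_walks_at by lia.
  destruct (Nat.eq_dec r M) as [->|Hne].
  - replace (S (S M * q + M)) with (S M * S q) by lia. rewrite concat_walks_start. left.
    replace M with (length (p q) - 1) by (rewrite p_length; lia).
    exact (walk_nth_last _ _ _ _ _ (p_walk q)).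
  - replace (S (S M * q + r)) with (S M * q + S r) by lia. rewrite concat_walks_at by lia.
    apply (walk_nth_S _ _ _ _ _ (p_walk q)). rewrite p_length; lia.
Qed.

Lemma concat_walks_in d q r : r <= M -> In (concat_walks (S M) p d (S M * q + r)) (p q).
Proof. intros Hr. rewrite concat_walks_at by lia. apply nth_In. rewrite p_length; lia. Qed.

End ConcatWalks.

Lemma reach_within_exact {V} (Gm : digraph V) K x y :
  reach_within Gm K x y -> exists l, walk Gm x y l /\ length l = S K.
Proof.
  intros [l [Hw Hl]]. exists (l ++ repeat y (S K - length l)). split; [apply walk_pad; auto|].
  rewrite length_app, repeat_length. lia.
Qed.

Lemma lazy_walk_through {V} (Gm : digraph V) K (c : nat -> V) :
  finite_indegree Gm -> finite_visits c -> (forall i, reach_within Gm K (c i) (c (S i))) ->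
  exists u, lazy_walk_seq Gm u /\ finite_visits u /\ (forall i, exists n, u n = c i) /\
    (forall n, exists i, reach_within Gm K (c i) (u n) /\ reach_within Gm K (u n) (c (S i))).
Proof.
  intros Hf Hc Hr.
  assert (Hp : forall i, exists l, walk Gm (c i) (c (S i)) l /\ length l = S K)
    by (intros i; apply reach_within_exact, Hr).
  apply choice in Hp. destruct Hp as [p Hp].
  assert (p_walk : forall i, walk Gm (c i) (c (S i)) (p i)) by apply Hp.
  assert (p_length : forall i, length (p i) = S K) by apply Hp.
  assert (Hnear : forall q r, r <= K -> let v := concat_walks (S K) p (c 0) (S K * q + r) in
    reach_within Gm K (c q) v /\ reach_within Gm K v (c (S q))).
  { intros q r Hr' v. pose proof (concat_walks_in K p p_length (c 0) q r Hr') as Hin.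
    destruct (walk_prefix _ _ _ _ _ (p_walk q) Hin) as [l1 [H1 H1']].
    destruct (walk_suffix _ _ _ _ _ (p_walk q) Hin) as [l2 [H2 H2']].
    rewrite p_length in H1', H2'. split; [exists l1 | exists l2]; auto. }
  exists (concat_walks (S K) p (c 0)). repeat split.
  - apply (concat_walks_lazy Gm K c p p_walk p_length).
  - intros v. destruct (reach_within_finite_sources Gm Hf K v) as [L HL].
    destruct (finite_visits_list c Hc L) as [N HN].
    exists (S K * N). intros n Hn. destruct (concat_walks_cases K n) as [q [r [Hr' ->]]].
    assert (q < N) by (apply HN, HL; rewrite <- Hn; apply (Hnear q r Hr')).
    nia.
  - intros i. exists (S K * i). apply (concat_walks_start Gm K c p p_walk).
  - intros n. destruct (concat_walks_cases K n) as [q [r [Hr' ->]]]. exists q. apply Hnear; auto.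
Qed.

Lemma last_visit {V} (w : nat -> V) : finite_visits w ->
  forall n, exists m, w m = w n /\ n <= m /\ forall m', w m' = w n -> m' <= m.
Proof.
  intros Hf n. destruct (Hf (w n)) as [N HN].
  assert (Hmax : forall N', (forall m, w m = w n -> m < N') ->
    exists m, w m = w n /\ forall m', w m' = w n -> m' <= m).
  { induction N' as [|N' IH]; intros HN'; [specialize (HN' n eq_refl); lia|].
    destruct (classic (w N' = w n)) as [E|E].
    - exists N'. split; auto. intros m' Hm'. specialize (HN' _ Hm'); lia.
    - apply IH. intros m Hm. specialize (HN' _ Hm).
      destruct (Nat.eq_dec m N'); subst; [contradiction | lia]. }
  destruct (Hmax N HN) as [m [Hm1 Hm2]]. exists m. repeat split; auto.
Qed.

Fixpoint iterate_after (f : nat -> nat) (k : nat) : nat :=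
  match k with 0 => f 0 | S k => f (S (iterate_after f k)) end.

(* Loop erasure: from each vertex jump to its last visit, then step on. *)
Lemma ray_of_lazy_walk {V} (Gm : digraph V) w : lazy_walk_seq Gm w -> finite_visits w ->
  exists s, is_ray Gm s /\ forall n, exists i, s n = w i.
Proof.
  intros Hs Hf. destruct (choice _ (last_visit w Hf)) as [lv Hlv].
  set (t := iterate_after lv).
  assert (Hlast : forall k m', w m' = w (t k) -> m' <= t k).
  { intros [|k] m' E; apply (proj2 (proj2 (Hlv _))); rewrite E; apply Hlv. }
  assert (Hinc : forall k, t k < t (S k)).
  { intros k. apply (proj1 (proj2 (Hlv (S (t k))))). }
  assert (Hmono : forall j k, j < k -> t j < t k).
  { intros j k H; induction H; [apply Hinc | pose proof (Hinc m); lia]. }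
  exists (fun k => w (t k)). split; [split|].
  - intros i j E. destruct (Nat.lt_total i j) as [H|[H|H]]; auto.
    + pose proof (Hlast i _ (eq_sym E)). pose proof (Hmono _ _ H). lia.
    + pose proof (Hlast j _ E). pose proof (Hmono _ _ H). lia.
  - intros k. change (Gm (w (t k)) (w (lv (S (t k))))). rewrite (proj1 (Hlv (S (t k)))).
    destruct (Hs (t k)) as [E|E]; auto. exfalso. pose proof (Hlast k _ (eq_sym E)). lia.
  - intros n. exists (t n); auto.
Qed.

Lemma finite_visits_comp {V1 V2} (h : V1 -> V2) (c : nat -> V1) :
  finite_fibres h -> finite_visits c -> finite_visits (fun n => h (c n)).
Proof.
  intros Hfib Hc v. destruct (Hfib v) as [L HL]. destruct (finite_visits_list c Hc L) as [N HN].
  exists N. intros n E. apply HN, HL; auto.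
Qed.

Lemma image_lazy_walk {Va Vb} (Ga : digraph Va) (Gb : digraph Vb) (h : Va -> Vb) K (c : nat -> Va) :
  finite_indegree Gb -> finite_fibres h -> coarse_map Ga Gb h K ->
  finite_visits c -> lazy_walk_seq Ga c ->
  exists u, lazy_walk_seq Gb u /\ finite_visits u /\ (forall i, exists n, u n = h (c i)) /\
    (forall n, exists i,
       reach_within Gb K (h (c i)) (u n) /\ reach_within Gb K (u n) (h (c (S i)))).
Proof.
  intros Hf Hfib He Hc Hs. apply (lazy_walk_through Gb K (fun i => h (c i))); auto.
  - apply finite_visits_comp; auto.
  - intros i. destruct (Hs i) as [E|E]; [rewrite E; apply reach_within_refl | apply He; auto].
Qed.

(** * Ends under coarse equivalence *)

Definition orient {V} (d : bool) (Gm : digraph V) : digraph V :=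
  if d then Gm else transpose Gm.

Definition locally_finite {V} (Gm : digraph V) : Prop :=
  finite_indegree Gm /\ finite_indegree (transpose Gm).

Lemma ray_or_antiray_orient {V} (Gm : digraph V) r :
  ray_or_antiray Gm r -> exists d, is_ray (orient d Gm) r.
Proof. intros [H|H]; [exists true | exists false]; exact H. Qed.

Lemma orient_ray_or_antiray {V} (Gm : digraph V) d r :
  is_ray (orient d Gm) r -> ray_or_antiray Gm r.
Proof. destruct d; [left | right]; exact H. Qed.

Lemma orient_two_way_walk {V} (Gm : digraph V) d w :
  lazy_walk_seq (orient d Gm) w -> two_way_walk Gm w.
Proof. destruct d; [left | right]; exact H. Qed.

Lemma locally_finite_orient {V} (Gm : digraph V) d :
  locally_finite Gm -> finite_indegree (orient d Gm).
Proof. destruct d; intros H; apply H. Qed.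

Lemma coarse_map_orient {V1 V2} (G1 : digraph V1) (G2 : digraph V2) h K d :
  coarse_map G1 G2 h K -> coarse_map (orient d G1) (orient d G2) h K.
Proof. destruct d; [auto | apply coarse_map_transpose]. Qed.

Lemma ray_or_antiray_injective {V} (Gm : digraph V) r : ray_or_antiray Gm r -> Injective r.
Proof. intros [[H _]|[H _]]; exact H. Qed.

Lemma is_ray_lazy {V} (Gm : digraph V) r : is_ray Gm r -> lazy_walk_seq Gm r.
Proof. intros [_ H] i. right; apply H. Qed.

Lemma preceq_range_sub {V} (Gm : digraph V) (s w : nat -> V) :
  Injective s -> (forall n, exists i, s n = w i) -> preceq Gm (range s) (range w).
Proof.
  intros Hs H. apply (preceq_of_common_seq _ _ _ s Hs).
  intros n; destruct (H n) as [i Hi]; split; [exists n | exists i]; auto.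
Qed.

Lemma preceq_range_sup {V} (Gm : digraph V) (s w : nat -> V) :
  Injective s -> (forall n, exists i, s n = w i) -> preceq Gm (range w) (range s).
Proof.
  intros Hs H. apply (preceq_of_common_seq _ _ _ s Hs).
  intros n; destruct (H n) as [i Hi]; split; [exists i | exists n]; auto.
Qed.

Section CoarseEquivalence.
Context {V1 V2 : Type} (G1 : digraph V1) (G2 : digraph V2)
  (phi : V1 -> V2) (psi : V2 -> V1) (K : nat).
Hypothesis G1_locally_finite : locally_finite G1.
Hypothesis G2_locally_finite : locally_finite G2.
Hypothesis phi_fibres : finite_fibres phi.
Hypothesis phi_psi : forall y, phi (psi y) = y.
Hypothesis phi_coarse : coarse_map G1 G2 phi K.
Hypothesis psi_coarse : coarse_map G2 G1 psi K.
Hypothesis psi_phi_near :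
  forall x, reach_within G1 K x (psi (phi x)) /\ reach_within G1 K (psi (phi x)) x.

Lemma psi_fibres : finite_fibres psi.
Proof. intros y. exists [phi y]. intros x E. left. rewrite <- E, phi_psi. auto. Qed.

Lemma psi_injective : Injective psi.
Proof. intros x y E. rewrite <- (phi_psi x), <- (phi_psi y), E. auto. Qed.

(* [W] is a lazy walk through the image of [r], loop-erased to the ray [s];
   [U] is a lazy walk through the image of [W] back in [G1]. *)
Record tracks (r : nat -> V1) (s : nat -> V2) (W : nat -> V2) (U : nat -> V1) : Prop := {
  tracks_ray : ray_or_antiray G2 s;
  tracks_W_walk : two_way_walk G2 W;
  tracks_W_visits : finite_visits W;
  tracks_W_through : forall i, exists n, W n = phi (r i);
  tracks_s_in_W : forall n, exists i, s n = W i;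
  tracks_U_walk : two_way_walk G1 U;
  tracks_U_visits : finite_visits U;
  tracks_U_through : forall n, exists i, U i = psi (W n) }.

Lemma tracks_exist r : ray_or_antiray G1 r -> exists s W U, tracks r s W U.
Proof.
  intros Hr. pose proof (injective_finite_visits r (ray_or_antiray_injective _ _ Hr)) as Hfr.
  destruct (ray_or_antiray_orient _ _ Hr) as [d Hd].
  destruct (image_lazy_walk (orient d G1) (orient d G2) phi K r
    (locally_finite_orient _ d G2_locally_finite) phi_fibres
    (coarse_map_orient _ _ _ _ d phi_coarse) Hfr (is_ray_lazy _ _ Hd))
    as [W [HW [HfW [HWr _]]]].
  destruct (ray_of_lazy_walk _ W HW HfW) as [s [Hs HsW]].
  destruct (image_lazy_walk (orient d G2) (orient d G1) psi K W
    (locally_finite_orient _ d G1_locally_finite) psi_fibres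
    (coarse_map_orient _ _ _ _ d psi_coarse) HfW HW) as [U [HU [HfU [HUW _]]]].
  exists s, W, U. split; eauto using orient_ray_or_antiray, orient_two_way_walk.
Qed.

Section Tracks.
Variables (r : nat -> V1) (s : nat -> V2) (W : nat -> V2) (U : nat -> V1).
Hypothesis Htr : tracks r s W U.

Lemma tracks_preceq_from X :
  preceq G2 (image phi (range r)) X -> preceq G2 (range s) X.
Proof.
  intros H. apply (preceq_trans_two_way G2 W); try apply Htr.
  - apply preceq_range_sub; [apply (ray_or_antiray_injective G2), Htr | apply Htr].
  - revert H. apply preceq_mono; auto.
    intros v [x [[i <-] <-]]. destruct (tracks_W_through _ _ _ _ Htr i) as [n Hn]. exists n; auto.
Qed.

Lemma tracks_preceq_to X :
  preceq G2 X (image phi (range r)) -> preceq G2 X (range s).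
Proof.
  intros H. apply (preceq_trans_two_way G2 W); try apply Htr.
  - revert H. apply preceq_mono; auto.
    intros v [x [[i <-] <-]]. destruct (tracks_W_through _ _ _ _ Htr i) as [n Hn]. exists n; auto.
  - apply preceq_range_sup; [apply (ray_or_antiray_injective G2), Htr | apply Htr].
Qed.

Lemma image_psi_in_U v : image psi (range s) v -> range U v.
Proof.
  intros [x [[n <-] <-]]. destruct (tracks_s_in_W _ _ _ _ Htr n) as [i ->].
  destruct (tracks_U_through _ _ _ _ Htr i) as [j Hj]. exists j; auto.
Qed.

Lemma phi_r_in_U n : range U (psi (phi (r n))).
Proof.
  destruct (tracks_W_through _ _ _ _ Htr n) as [i Hi].
  destruct (tracks_U_through _ _ _ _ Htr i) as [j Hj]. exists j. rewrite Hj, Hi; auto.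
Qed.

Hypothesis Hr : ray_or_antiray G1 r.

Lemma tracks_preceq_back_from Y :
  preceq G1 (image psi (range s)) Y -> preceq G1 (range r) Y.
Proof.
  intros H. apply (preceq_trans_two_way G1 U); try apply Htr.
  - apply (preceq_of_near G1 K r); [apply G1_locally_finite | |].
    + apply injective_finite_visits, (ray_or_antiray_injective G1), Hr.
    + intros n. split; [exists n; auto|].
      exists (psi (phi (r n))). split; [apply phi_r_in_U | apply psi_phi_near].
  - revert H. apply preceq_mono; auto. apply image_psi_in_U.
Qed.

Lemma tracks_preceq_back_to X :
  preceq G1 X (image psi (range s)) -> preceq G1 X (range r).
Proof.
  intros H. apply (preceq_trans_two_way G1 U); try apply Htr.
  - revert H. apply preceq_mono; auto. apply image_psi_in_U.
  - apply (preceq_of_near G1 K (fun n => psi (phi (r n)))); [apply G1_locally_finite | |].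
    + apply (finite_visits_comp (fun x => psi (phi x))).
      * intros y. destruct (phi_fibres (phi y)) as [L HL]. exists L. intros x E.
        apply HL. rewrite <- E, phi_psi. auto.
      * apply injective_finite_visits, (ray_or_antiray_injective G1), Hr.
    + intros n. split; [apply phi_r_in_U|].
      exists (r n). split; [exists n; auto | apply psi_phi_near].
Qed.

End Tracks.

Lemma tracks_preceq r s W U r' s' W' U' :
  tracks r s W U -> tracks r' s' W' U' ->
  preceq G1 (range r) (range r') -> preceq G2 (range s) (range s').
Proof.
  intros Ht Ht' H. apply (tracks_preceq_from r s W U Ht), (tracks_preceq_to r' s' W' U' Ht').
  apply (preceq_image G1 G2 phi K); auto. apply G2_locally_finite.
Qed.

Lemma tracks_preceq_back r s W U r' s' W' U' :
  tracks r s W U -> tracks r' s' W' U' -> ray_or_antiray G1 r -> ray_or_antiray G1 r' ->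
  preceq G2 (range s) (range s') -> preceq G1 (range r) (range r').
Proof.
  intros Ht Ht' Hr Hr' H.
  apply (tracks_preceq_back_from r s W U Ht Hr), (tracks_preceq_back_to r' s' W' U' Ht' Hr').
  apply (preceq_image G2 G1 psi K); auto using psi_fibres. apply G1_locally_finite.
Qed.

Lemma pullback_ray s0 : ray_or_antiray G2 s0 ->
  exists r, ray_or_antiray G1 r /\
    preceq G1 (range r) (image psi (range s0)) /\ preceq G1 (image psi (range s0)) (range r).
Proof.
  intros Hs0. pose proof (ray_or_antiray_injective _ _ Hs0) as Hinj.
  destruct (ray_or_antiray_orient _ _ Hs0) as [d Hd].
  destruct (image_lazy_walk (orient d G2) (orient d G1) psi K s0
    (locally_finite_orient _ d G1_locally_finite) psi_fibres
    (coarse_map_orient _ _ _ _ d psi_coarse) (injective_finite_visits _ Hinj) (is_ray_lazy _ _ Hd))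
    as [Vv [HV [HfV [HVs Hnear]]]].
  destruct (ray_of_lazy_walk _ Vv HV HfV) as [r [Hr HrV]].
  pose proof (orient_ray_or_antiray _ _ _ Hr) as Hr'.
  pose proof (orient_two_way_walk _ _ _ HV) as HV'.
  pose proof (ray_or_antiray_injective _ _ Hr') as Hrinj.
  exists r. repeat split; auto; apply (preceq_trans_two_way G1 Vv); auto.
  - apply preceq_range_sub; auto.
  - apply (preceq_of_near G1 K Vv); [apply G1_locally_finite | auto|].
    intros n. split; [exists n; auto|]. destruct (Hnear n) as [i [H1 H2]].
    destruct d; [exists (psi (s0 (S i))) | exists (psi (s0 i))];
      (split; [eexists; split; [eexists|]; reflexivity|]); [exact H2|].
    apply reach_within_transpose in H1. exact H1.
  - apply (preceq_of_common_seq _ _ _ (fun n => psi (s0 n))).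
    + intros i j E. apply Hinj, psi_injective, E.
    + intros n. split; [exists (s0 n); split; [exists n|]; auto | apply HVs].
  - apply preceq_range_sup; auto.
Qed.

Lemma image_phi_psi (X : V2 -> Prop) v : image phi (image psi X) v -> X v.
Proof. intros [x [[y [Hy <-]] <-]]. rewrite phi_psi. exact Hy. Qed.

Theorem same_number_of_ends_of_coarse_equivalence : same_number_of_ends G1 G2.
Proof.
  assert (Hf : forall r, exists s, ray_or_antiray G1 r -> exists W U, tracks r s W U).
  { intros r. destruct (classic (ray_or_antiray G1 r)) as [Hr|Hr].
    - destruct (tracks_exist r Hr) as [s [W [U Ht]]]. exists s. eauto.
    - exists (fun n => phi (r n)). contradiction. }
  destruct (choice _ Hf) as [f Hft]. exists f. split; [|split].
  - intros r Hr. destruct (Hft r Hr) as [W [U Ht]]. apply Ht.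
  - intros r r' Hr Hr'. destruct (Hft r Hr) as [W [U Ht]], (Hft r' Hr') as [W' [U' Ht']].
    split; intros [H1 H2]; split; eauto using tracks_preceq, tracks_preceq_back.
  - intros s0 Hs0. destruct (pullback_ray s0 Hs0) as [r [Hr [H1 H2]]].
    exists r. split; auto. destruct (Hft r Hr) as [W [U Ht]].
    apply (preceq_image G1 G2 phi K) in H1, H2; auto; try apply G2_locally_finite.
    split.
    + apply (tracks_preceq_from r _ W U Ht). revert H1.
      apply preceq_mono; auto. apply image_phi_psi.
    + apply (tracks_preceq_to r _ W U Ht). revert H2.
      apply preceq_mono; auto. apply image_phi_psi.
Qed.

End CoarseEquivalence.

(** * Cayley digraphs *)

Section CayleyGraphs.
Context {M : Type} (mul : M -> M -> M) (A : list M).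
Hypothesis mul_assoc : forall x y z, mul (mul x y) z = mul x (mul y z).

Lemma fold_left_walk l : Forall (fun b => In b A) l ->
  forall y, exists lw,
    walk (right_cayley mul A) y (fold_left mul l y) lw /\ length lw = S (length l).
Proof.
  induction 1 as [|b l Hb Hl IH]; intros y; [exists [y]; split; [constructor | reflexivity]|].
  destruct (IH (mul y b)) as [lw [Hw Hlen]]. exists (y :: lw). split; [|simpl; lia].
  econstructor; [right; exists b; split; auto | exact Hw].
Qed.

Lemma mul_fold_left l x a : mul x (fold_left mul l a) = fold_left mul l (mul x a).
Proof.
  revert a; induction l as [|b l IH]; intros a; simpl; [reflexivity|].
  rewrite IH, mul_assoc. reflexivity.
Qed.

Lemma cayley_reach_within_bounded : sgp_generates mul A -> forall T : list M,
  exists K, forall K', K <= K' ->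
    forall t x, In t T -> reach_within (right_cayley mul A) K' x (mul x t).
Proof.
  intros HA T. induction T as [|t T IH]; [exists 0; intros K' _ t x []|].
  destruct IH as [K HK], (HA t) as [a [l [Ha [Hl Ht]]]].
  exists (S (length l) + K). intros K' HK' t' x [<-|Ht']; [|apply HK; auto; lia].
  destruct (fold_left_walk l Hl (mul x a)) as [lw [Hw Hlen]].
  exists (x :: lw). split; [|simpl; lia].
  rewrite Ht, mul_fold_left. econstructor; [right; exists a; split; auto | exact Hw].
Qed.

Lemma cayley_finite_outdegree : finite_indegree (transpose (right_cayley mul A)).
Proof. intros y. exists (map (mul y) A). intros x [a [Ha ->]]. apply in_map; auto. Qed.

Lemma cayley_finite_indegree :
  (forall a, In a A -> finite_fibres (fun x => mul x a)) -> finite_indegree (right_cayley mul A).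
Proof.
  intros H y.
  assert (Hfib : forall a, exists L, forall x, In a A /\ mul x a = y -> In x L).
  { intros a. destruct (classic (In a A)) as [Ha|Ha].
    - destruct (H a Ha y) as [L HL]. exists L. intros x [_ E]. auto.
    - exists []. intros x [Ha' _]. contradiction. }
  destruct (finite_union _ Hfib A) as [L HL]. exists L. intros x [a [Ha ->]]. eapply HL; eauto.
Qed.

End CayleyGraphs.

Section RightZeroProduct.
Context {G E : Type} (mul : G -> G -> G) (one : G) (inv : G -> G) (mulE : E -> E -> E).
Hypothesis HG : is_group mul one inv.
Hypothesis HErz : right_zero mulE.

Lemma group_mulK x a : mul (mul x a) (inv a) = x.
Proof. destruct HG as [Hass [_ [Hr1 [_ Hrinv]]]]. rewrite Hass, Hrinv, Hr1. reflexivity. Qed.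

Lemma group_right_mul_fibres a : finite_fibres (fun x => mul x a).
Proof. intros y. exists [mul y (inv a)]. intros x <-. left. apply group_mulK. Qed.

Lemma prod_mul_assoc x y z :
  prod_mul mul mulE (prod_mul mul mulE x y) z = prod_mul mul mulE x (prod_mul mul mulE y z).
Proof. unfold prod_mul; simpl. rewrite (proj1 HG), !HErz. reflexivity. Qed.

Lemma prod_mul_e0 g e e0 : prod_mul mul mulE (g, e) (one, e0) = (g, e0).
Proof. unfold prod_mul; simpl. rewrite (proj1 (proj2 (proj2 HG))), HErz. reflexivity. Qed.

Variable lE : list E.
Hypothesis lE_complete : forall e, In e lE.

Lemma fst_fibres : finite_fibres (@fst G E).
Proof. intros g. exists (map (pair g) lE). intros [g' e] <-. apply in_map, lE_complete. Qed.

Lemma prod_right_mul_fibres a : finite_fibres (fun x => prod_mul mul mulE x a).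
Proof.
  intros y. destruct (fst_fibres (mul (fst y) (inv (fst a)))) as [L HL]. exists L.
  intros x <-. apply HL. symmetry. apply group_mulK.
Qed.

Section Coarse.
Variables (A : list (G * E)) (B : list G) (e0 : E) (K : nat).
Notation GE := (right_cayley (prod_mul mul mulE) A).

Lemma fst_coarse :
  (forall t x, In t (map fst A) -> reach_within (right_cayley mul B) K x (mul x t)) ->
  coarse_map GE (right_cayley mul B) fst K.
Proof. intros HK x y [a [Ha ->]]. apply HK, in_map; auto. Qed.

Lemma pair_coarse :
  (forall t x, In t (map (fun b => (b, e0)) B) -> reach_within GE K x (prod_mul mul mulE x t)) ->
  coarse_map (right_cayley mul B) GE (fun g => (g, e0)) K.
Proof.
  intros HK x y [b [Hb ->]].
  replace (mul x b, e0) with (prod_mul mul mulE (x, e0) (b, e0))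
    by (unfold prod_mul; cbn; rewrite HErz; auto).
  apply HK, in_map_iff; eauto.
Qed.

Lemma pair_fst_near :
  (forall t x, In t (map (pair one) lE) -> reach_within GE K x (prod_mul mul mulE x t)) ->
  forall x, reach_within GE K x (fst x, e0) /\ reach_within GE K (fst x, e0) x.
Proof.
  intros HK [g e]. cbn. split.
  - rewrite <- (prod_mul_e0 g e e0). apply HK, in_map, lE_complete.
  - rewrite <- (prod_mul_e0 g e0 e). apply HK, in_map, lE_complete.
Qed.

End Coarse.

End RightZeroProduct.

Theorem mainTheorem10 (G E : Type) (mul : G -> G -> G) (one : G) (inv : G -> G)
  (mulE : E -> E -> E)
  (HG : is_group mul one inv)
  (HGfg : exists B : list G, sgp_generates mul B)
  (HEfin : exists l : list E, forall e, In e l)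
  (HEne : inhabited E)
  (HErz : right_zero mulE)
  (A : list (G * E)) (HA : sgp_generates (prod_mul mul mulE) A)
  (B : list G) (HB : sgp_generates mul B) :
  same_number_of_ends (right_cayley (prod_mul mul mulE) A) (right_cayley mul B).
Proof.
  destruct HEfin as [lE HlE], HEne as [e0].
  pose proof (prod_mul_assoc mul one inv mulE HG HErz) as Hassoc.
  destruct (cayley_reach_within_bounded mul B (proj1 HG) HB (map fst A)) as [K1 HK1].
  destruct (cayley_reach_within_bounded _ A Hassoc HA (map (fun b => (b, e0)) B)) as [K2 HK2].
  destruct (cayley_reach_within_bounded _ A Hassoc HA (map (pair one) lE)) as [K3 HK3].
  apply (same_number_of_ends_of_coarse_equivalence _ _ fst (fun g => (g, e0)) (K1 + K2 + K3)).
  - split; [apply cayley_finite_indegree | apply cayley_finite_outdegree].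
    intros a _. apply (prod_right_mul_fibres mul one inv mulE HG lE HlE).
  - split; [apply cayley_finite_indegree | apply cayley_finite_outdegree].
    intros a _. apply (group_right_mul_fibres mul one inv HG).
  - apply (fst_fibres lE HlE).
  - reflexivity.
  - apply fst_coarse, HK1. lia.
  - apply pair_coarse; [exact HErz | apply HK2; lia].
  - apply (pair_fst_near mul one inv mulE HG HErz lE HlE), HK3. lia.
Qed.
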